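(* (a) For every $\epsilon>0$ there are infinitely many natural numbers $k$ with $h(k)>(2-\epsilon)k$. (b) For every $\epsilon>0$ there is $K$ such that $h(k)<(2+\epsilon)k\ln k$ for all $k\geq K$ (in particular $h(k)$ exists for every $k$).
   Context: Graphs are finite, may have multiple edges but no loops. For an Abelian group $\Gamma$, a graph $G$ is $\Gamma$-colorable if for some (equivalently, any) orientation $D$ of $G$ and every function $\varphi:E(G)\to\Gamma$ there is a vertex coloring $c:V(G)\to\Gamma$ with $c(w)-c(u)\neq\varphi(uw)$ for every directed edge $uw$ of $D$. For a natural number $k$, $h(k)$ is the least number such that whenever a graph $G$ is $\Gamma$-colorable for some Abelian group $\Gamma$ of order $k$, $G$ is also $\Gamma'$-colorable for every Abelian group $\Gamma'$ of order $|\Gamma'|\geq h(k)$. *)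

From mathcomp Require Import all_boot all_algebra.
Set Implicit Arguments. Unset Strict Implicit. Unset Printing Implicit Defensive.
Import GRing.Theory.
Local Open Scope ring_scope.

(* A finite loopless multigraph together with a fixed orientation:
   vertex set V, edge set E (parallel edges allowed), each edge e directed
   from [tl e] to [hd e], with [tl e != hd e] (no loops).
   Every finite loopless multigraph arises this way (choose any orientation);
   Gamma-colorability does not depend on the orientation. *)
Record ograph := OGraph {
  gV : finType;
  gE : finType;
  tl : gE -> gV;
  hd : gE -> gV;
  loopless : forall e, tl e != hd e
}.

Definition colorable (Gamma : finZmodType) (G : ograph) : Prop :=
  forall phi : gE G -> Gamma, exists c : gV G -> Gamma,
    forall e : gE G, c (hd e) - c (tl e) != phi e.

Definition h_prop (k m : nat) : Prop :=
  forall G : ograph,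
    (exists Gamma : finZmodType, #|Gamma| = k /\ colorable Gamma G) ->
    forall Gamma' : finZmodType, (m <= #|Gamma'|)%N -> colorable Gamma' G.

Definition is_h (k m : nat) : Prop :=
  h_prop k m /\ forall m', h_prop k m' -> (m <= m')%N.

(* If G is colorable by a group of order k, then every vertex
   set S spanning e edges satisfies k^e <= k^|S| (k-1)^e: each of the k^e
   labellings of the edges inside S is respected by one of the k^|S|
   colorings of S, and each coloring respects only (k-1)^e labellings.  If all
   degrees inside S were at least M, then 2e >= M|S|, contradicting
   k^2 (k-1)^M < k^M, which holds once M > 2 k ln k because
   ln (k / (k-1)) >= 1/k.  So some vertex of S has degree < M, and greedy
   coloring works for every group of order at least M.

   For a prime p, replace every edge of the cycle of length p by
   p-2 parallel edges.  The graph is F_p-colorable: each class of parallel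
   edges forbids at most p-2 differences, and in F_p adding a set of size at
   least 2 enlarges every proper nonempty set (otherwise it would be invariant
   under a nonzero shift), so p-1 such summands cover F_p and a closed walk
   with allowed steps exists.  It is not Z_2 x Z_(p-2)-colorable: labelling
   the parallel edges by all (0, b) forces every step to be 1 in the first
   coordinate, impossible around an odd cycle.  Hence h(p) > 2(p-2). *)

From Stdlib Require Import Reals Lra Lia Classical Wf_nat.

(* MathComp is imported only inside this module, so that [<=]%nat in the
   final statement keeps its Stdlib meaning. *)
Module Coloring.
From HB Require Import structures.
From mathcomp Require Import all_boot all_algebra zify.
Set Implicit Arguments. Unset Strict Implicit. Unset Printing Implicit Defensive.
Import GRing.Theory.

Lemma card_bigcup_leq (I T : finType) (P : pred I) (F : I -> {set T}) :
  #|\bigcup_(i | P i) F i| <= \sum_(i | P i) #|F i|.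
Proof.
apply: (big_ind2 (fun (A : {set T}) n => #|A| <= n)) => [|A m B n hA hB|//].
  by rewrite cards0.
exact: leq_trans (leq_card_setU A B) (leq_add hA hB).
Qed.

Lemma sum_card_fibers (I J : finType) (A : {set I}) (B : {pred J}) (f : I -> J) :
  {in A, forall i, f i \in B} -> \sum_(j in B) #|[set i in A | f i == j]| = #|A|.
Proof.
move=> fAB; rewrite -sum1_card (partition_big f (mem B)) //=.
by apply: eq_bigr => j _; rewrite -sum1_card; apply: eq_bigl => i; rewrite inE.
Qed.

Lemma ltn_exp_scaled x y M s n : y < x -> 0 < s -> x ^ 2 * y ^ M < x ^ M ->
  M * s <= n -> x ^ (2 * s) * y ^ n < x ^ n.
Proof.
move=> yx s0 ratio /subnKC <-; set r := n - M * s.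
have pow_r : y ^ r <= x ^ r by elim: r => // r IH; rewrite !expnS leq_mul // ltnW.
have x_r : 0 < x ^ r by rewrite expn_gt0 (leq_ltn_trans _ yx).
rewrite (expnD y) (expnD x (M * s)) mulnA.
rewrite (leq_ltn_trans (leq_mul (leqnn _) pow_r)) // ltn_pmul2r //.
by rewrite (expnM x 2 s) (expnM y M s) (expnM x M s) -expnMn ltn_exp2r.
Qed.

Section Degeneracy.
Variable G : ograph.
Implicit Types (S : {set gV G}) (v : gV G).

Definition inner_edges S : {set gE G} := [set e | (tl e \in S) && (hd e \in S)].

Definition degree_in S v : nat :=
  #|[set e in inner_edges S | tl e == v]| + #|[set e in inner_edges S | hd e == v]|.

Lemma sum_degree_in S : \sum_(v in S) degree_in S v = 2 * #|inner_edges S|.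
Proof.
by rewrite big_split /= !sum_card_fibers ?mul2n ?addnn // => e; rewrite inE => /andP[].
Qed.

Section Greedy.
Variables (Gm : finZmodType) (phi : gE G -> Gm).
Local Open Scope ring_scope.

Definition colors_on S (c : gV G -> Gm) :=
  forall e, e \in inner_edges S -> c (hd e) - c (tl e) != phi e.

Lemma colors_on_extend S v c :
  v \in S -> (degree_in S v < #|Gm|)%N -> colors_on (S :\ v) c ->
  exists c', colors_on S c'.
Proof.
move=> vS small col.
pose out := [set e in inner_edges S | tl e == v].
pose inc := [set e in inner_edges S | hd e == v].
pose forbidden := [set c (hd e) - phi e | e in out] :|: [set c (tl e) + phi e | e in inc].
have /card_gt0P[a] : (0 < #|~: forbidden|)%N.
  rewrite cardsCs setCK subn_gt0; apply: leq_ltn_trans small.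
  exact: leq_trans (leq_card_setU _ _) (leq_add (leq_imset_card _ _) (leq_imset_card _ _)).
rewrite !inE negb_or => /andP[a_out a_inc].
exists (fun x => if x == v then a else c x) => e eS.
case: (eqVneq (tl e) v) => [tv|tv]; case: (eqVneq (hd e) v) => [hv|hv].
- by have := loopless e; rewrite tv hv eqxx.
- apply: contra a_out => /eqP E.
  by apply/imsetP; exists e; [apply/setIdP; rewrite tv | rewrite -E opprB addrC subrK].
- apply: contra a_inc => /eqP E.
  by apply/imsetP; exists e; [apply/setIdP; rewrite hv | rewrite -E addrC subrK].
- apply: col.
  by move: eS; rewrite !inE tv hv.
Qed.

Lemma exists_colors_on S :
  (forall X, X != set0 -> exists2 v, v \in X & (degree_in X v < #|Gm|)%N) ->
  exists c, colors_on S c.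
Proof.
move=> low; have [n] := ubnP #|S|; elim: n => // n IHn in S *; rewrite ltnS => leSn.
have [->|/low[v vS small]] := eqVneq S set0.
  by exists (fun _ => 0) => e; rewrite !inE.
have [|c col] := IHn (S :\ v); first by rewrite (cardsD1 v S) vS in leSn.
exact: colors_on_extend vS small col.
Qed.

End Greedy.

Lemma colorable_of_low_degree (Gm : finZmodType) :
  (forall S, S != set0 -> exists2 v, v \in S & degree_in S v < #|Gm|) ->
  colorable Gm G.
Proof.
move=> low phi; have [c col] := exists_colors_on phi setT low.
by exists c => e; apply: col; rewrite !inE.
Qed.

Lemma colorable_count (Gm : finZmodType) S : colorable Gm G ->
  #|Gm| ^ #|inner_edges S| <= #|Gm| ^ #|S| * #|Gm|.-1 ^ #|inner_edges S|.
Proof.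
move=> col; set E := inner_edges S.
pose good (c : {ffun gV G -> Gm}) :=
  [set phi in pfamily 0%R E (fun e => predC1 (c (hd e) - c (tl e))%R)].
have card_good c : #|good c| = #|Gm|.-1 ^ #|E|.
  rewrite cardsE card_pfamily (cardE E) /image_mem.
  by elim: (enum E) => //= e s ->; rewrite cardC1 expnS.
have cover : [set phi in pffun_on 0%R E predT] \subset
             \bigcup_(c in pffun_on 0%R S predT) good c.
  apply/subsetP => phi; rewrite inE => /pffun_onP[phiE _].
  have [c0 hc0] := col phi.
  pose c := [ffun v => if v \in S then c0 v else 0%R].
  apply/bigcupP; exists c.
    apply/pffun_onP; split=> //; apply/subsetP => v.
    by rewrite !inE ffunE; case: (v \in S); rewrite ?eqxx.
  rewrite inE; apply/pfamilyP; split=> // e; rewrite !inE /= !ffunE => /andP[-> ->].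
  by rewrite eq_sym.
have := leq_trans (subset_leq_card cover) (card_bigcup_leq _ _).
by rewrite cardsE card_pffun_on (eq_bigr _ (fun c _ => card_good c)) sum_nat_const
  card_pffun_on.
Qed.

Lemma exists_low_degree (Gm : finZmodType) M S : colorable Gm G ->
  #|Gm| ^ 2 * #|Gm|.-1 ^ M < #|Gm| ^ M ->
  S != set0 -> exists2 v, v \in S & degree_in S v < M.
Proof.
move=> col ratio S0.
have [/exists_inP //|/exists_inP none] := boolP [exists v in S, degree_in S v < M].
have many : M * #|S| <= 2 * #|inner_edges S|.
  rewrite -sum_degree_in mulnC -sum_nat_const; apply: leq_sum => v vS.
  by rewrite leqNgt; apply: contra_notN none => low; exists v.
have pred_lt : #|Gm|.-1 < #|Gm| by rewrite ltn_predL; apply/card_gt0P; exists 0%R.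
have := ltn_exp_scaled pred_lt _ ratio many; rewrite card_gt0 => /(_ S0).
have := colorable_count S col; rewrite -leq_sqr expnMn -!expnM ![_ * 2]mulnC.
by move=> /leq_ltn_trans lt /lt; rewrite ltnn.
Qed.

End Degeneracy.

Lemma h_prop_of_ratio k M : k ^ 2 * k.-1 ^ M < k ^ M -> h_prop k M.
Proof.
move=> ratio G [Gm [card_Gm col]] Gm' M_le; rewrite -card_Gm in ratio.
apply: colorable_of_low_degree => S S0.
have [v vS low] := exists_low_degree col ratio S0.
by exists v; last exact: leq_trans M_le.
Qed.

Section PrimeSumsets.
Variable p : nat.
Hypothesis p_pr : prime p.
Local Open Scope ring_scope.
Implicit Types A D : {set 'F_p}.

Lemma shift_closed_setT A x0 d :
  d != 0 -> x0 \in A -> {in A, forall x, x + d \in A} -> A = setT.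
Proof.
move=> d0 Ax0 closed.
have Ax0_shift m : x0 + d *+ m \in A.
  by elim: m => [|m IHm]; rewrite ?mulr0n ?addr0 // mulrSr addrA closed.
apply/setP => z; rewrite inE; have := Ax0_shift ((z - x0) / d : 'F_p).
by rewrite -mulr_natr natr_Zp mulrC divfK // addrC subrK.
Qed.

Lemma card_sumset_ge A D : A != set0 -> (1 < #|D|)%N ->
  (minn p #|A|.+1 <= #|[set (x + y)%R | x in A, y in D]|)%N.
Proof.
move=> A0 /card_gt1P[a [b [aD bD ab]]].
set AD := [set x + y | x in A, y in D].
have shift_sub c : c \in D -> [set x + c | x in A] \subset AD.
  by move=> cD; apply/subsetP => _ /imsetP[x xA ->]; apply/imset2P; exists x c.
have card_shift c : #|[set x + c | x in A]| = #|A| by apply: card_imset; exact: addIr.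
have A_le : (#|A| <= #|AD|)%N by rewrite -(card_shift a) subset_leq_card ?shift_sub.
have [AT|AnT] := eqVneq A setT.
  by apply: leq_trans A_le; rewrite AT cardsT card_Fp // geq_minl.
rewrite geq_min ltn_neqAle A_le andbT orbC; apply/orP; left.
apply: contra AnT => /eqP eq_card; apply/eqP.
have shift_eq c : c \in D -> [set x + c | x in A] = AD.
  by move=> cD; apply/eqP; rewrite eqEcard shift_sub //= card_shift eq_card.
have [x0 Ax0] := set0Pn A A0.
apply: (@shift_closed_setT _ x0 (b - a)) => // [|x Ax]; first by rewrite subr_eq0 eq_sym.
have : x + b \in [set x + a | x in A] by rewrite shift_eq // -(shift_eq b) //; apply: imset_f.
by case/imsetP => y Ay e; rewrite addrA e addrK.
Qed.

Variable D : nat -> {set 'F_p}.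

Fixpoint iter_sumset j : {set 'F_p} :=
  if j is j'.+1 then [set x + y | x in iter_sumset j', y in D j'] else [set 0].

Lemma mem_iter_sumset j x : x \in iter_sumset j -> exists c : nat -> 'F_p,
  [/\ c 0%N = 0, c j = x & forall i, (i < j)%N -> c i.+1 - c i \in D i].
Proof.
elim: j x => [|j IHj] x /=; first by rewrite inE => /eqP ->; exists (fun=> 0).
case/imset2P => y d /IHj[c [c0 cj c_step]] dD ->.
exists (fun i => if i == j.+1 then y + d else c i); split=> //; first by rewrite eqxx.
move=> i; rewrite ltnS leq_eqVlt => /predU1P[->|ij].
  by rewrite eqxx (ltn_eqF (ltnSn j)) cj addrC addKr.
by rewrite eqSS (ltn_eqF ij) (ltn_eqF (ltn_trans ij (ltnSn j))) c_step.
Qed.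

Hypothesis D_gt1 : forall i, (1 < #|D i|)%N.

Lemma card_iter_sumset j : (minn p j.+1 <= #|iter_sumset j|)%N.
Proof.
elim: j => [|j IHj] /=; first by rewrite cards1 geq_minr.
have A0 : iter_sumset j != set0.
  by rewrite -card_gt0 (leq_trans _ IHj) // leq_min prime_gt0.
apply: leq_trans (card_sumset_ge A0 (D_gt1 j)); move: IHj; lia.
Qed.

Lemma exists_closed_walk n : (p.-1 <= n)%N -> exists c : nat -> 'F_p,
  [/\ c 0%N = 0, c n = 0 & forall i, (i < n)%N -> c i.+1 - c i \in D i].
Proof.
move=> long; apply: mem_iter_sumset.
suff -> : iter_sumset n = setT by rewrite inE.
apply/eqP; rewrite eqEcard subsetT cardsT card_Fp //= (leq_trans _ (card_iter_sumset n)) //.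
by rewrite leq_min leqnn -(prednK (prime_gt0 p_pr)).
Qed.

End PrimeSumsets.

Section Multicycle.
Variables (n : nat) (T : finType).

Lemma ordS_neq (i : 'I_n.+2) : i != ordS i.
Proof.
apply/eqP => /(congr1 val) /=; have [lt|ge] := ltnP i.+1 n.+2.
  by rewrite modn_small // => /n_Sn.
have -> : i.+1 = n.+2 by apply/eqP; rewrite eqn_leq ge ltn_ord.
by rewrite modnn => i0; move: ge; rewrite i0.
Qed.

Definition multicycle : ograph :=
  @OGraph 'I_n.+2 ('I_n.+2 * T)%type (fun e => e.1) (fun e => ordS e.1)
    (fun e => ordS_neq e.1).

Lemma closed_walk_ordS (X : Type) (c : nat -> X) (i : 'I_n.+2) :
  c 0%N = c n.+2 -> c (ordS i) = c i.+1.
Proof.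
move=> closed /=; have [lt|ge] := ltnP i.+1 n.+2; first by rewrite modn_small.
have -> : i.+1 = n.+2 by apply/eqP; rewrite eqn_leq ge ltn_ord.
by rewrite modnn.
Qed.

Lemma multicycle_colorable_Fp p : prime p -> #|T| + 2 <= p -> p.-1 <= n.+2 ->
  colorable ('F_p : finZmodType) multicycle.
Proof.
move=> p_pr T_small long phi.
pose D i := ~: [set phi (inord i, t) | t in T].
have D_gt1 i : 1 < #|D i|.
  rewrite cardsCs setCK card_Fp // (leq_trans _ (leq_sub2l p (leq_imset_card _ _))) //.
  by rewrite ltn_subRL -addnS.
have [c [c0 cn c_step]] := exists_closed_walk p_pr D_gt1 long.
exists (fun v : 'I_n.+2 => c v) => -[i t] /=; rewrite (@closed_walk_ordS _ c) ?c0 ?cn //.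
have := c_step i (ltn_ord i); rewrite inE; apply: contra => /eqP E.
by apply/imsetP; exists t; rewrite // inord_val E.
Qed.

End Multicycle.

(* The product of two finite Z-modules is not declared a finite Z-module in
   MathComp; re-declaring its Z-module structure creates the join. *)
HB.instance Definition _ (A B : finZmodType) :=
  GRing.Zmodule.copy (A * B)%type (A * B)%type.

Section OddCycleParity.
Local Open Scope ring_scope.

Lemma Zp2_neq0 (z : 'Z_2) : z != 0 -> z = 1.
Proof. by case: z => [[|[|m]] lt] //= _; apply: val_inj. Qed.

Lemma multicycle_not_colorable n (B : finZmodType) :
  odd n.+2 -> ~ colorable ('Z_2 * B)%type (multicycle n B).
Proof.
move=> odd_len /(_ (fun e => (0, e.2)))[c hc].
have step i : (c (ordS i) - c i).1 = 1.
  apply: Zp2_neq0; have := hc (i, (c (ordS i) - c i).2).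
  by apply: contra => /eqP E; rewrite [X in X == _]surjective_pairing E.
have sum0 : \sum_(i < n.+2) (c (ordS i) - c i) = 0.
  by rewrite sumrB [X in _ - X](reindex_inj (@ordS_inj _)) subrr.
have /eqP := congr1 fst sum0; apply/negP.
rewrite raddf_sum (eq_bigr _ (fun i _ => step i)) sumr_const card_ord.
by rewrite -[1 *+ _]/(n.+2%:R) Zp_nat -val_eqE /= modn2 odd_len.
Qed.

End OddCycleParity.

Lemma h_prop_gt p (B : finZmodType) m :
  prime p -> #|B| + 2 <= p -> h_prop p m -> 2 * #|B| < m.
Proof.
move=> p_pr B_small hm; rewrite ltnNge; apply/negP => m_le.
have B_gt0 : 0 < #|B| by apply/card_gt0P; exists 0%R.
have p_odd : odd p by case/even_prime: p_pr => // p2; move: B_small; rewrite p2; lia.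
have len : (p - 2).+2 = p by have := prime_gt1 p_pr; lia.
apply: (@multicycle_not_colorable (p - 2) B); first by rewrite len.
apply: hm; last by rewrite card_prod card_ord.
exists ('F_p : finZmodType); split; first exact: card_Fp.
by apply: multicycle_colorable_Fp; rewrite ?len ?leq_pred.
Qed.

Lemma h_prop_prime_gt p m : prime p -> 4 <= p -> h_prop p m -> 2 * (p - 2) < m.
Proof.
move=> p_pr p_ge4; have card_Z : #|'Z_(p - 2)| = p - 2 by rewrite card_ord Zp_cast //; lia.
by move/(@h_prop_gt _ ('Z_(p - 2) : finZmodType)); rewrite card_Z; apply=> //; lia.
Qed.

Lemma h_prop0 m : h_prop 0 m.
Proof.
move=> G [Gm [card_Gm _]]; suff : 0 < #|Gm| by rewrite card_Gm.
by apply/card_gt0P; exists 0%R.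
Qed.

Lemma is_h_exists k M : h_prop k M -> exists m, is_h k m.
Proof.
move=> hM; have [m [[hm m_min] _]] := dec_inh_nat_subset_has_unique_least_element
  (h_prop k) (fun m => classic _) (ex_intro _ M hM).
by exists m; split=> // m' /m_min /leP.
Qed.

Lemma is_h_le k m M : is_h k m -> h_prop k M -> (m <= M)%coq_nat.
Proof. by move=> [_ m_min] /m_min /leP. Qed.

Lemma h_prop_of_pow_lt k M :
  (Nat.pow k 2 * Nat.pow (k - 1) M < Nat.pow k M)%coq_nat -> h_prop k M.
Proof.
have expn_pow a b : a ^ b = Nat.pow a b by elim: b => // b IH; rewrite expnS IH.
by move=> /ltP ratio; apply: h_prop_of_ratio; rewrite -subn1 !expn_pow.
Qed.

Lemma h_gt_infinitely_often N :
  exists p, (N <= p)%coq_nat /\ forall m, is_h p m -> (2 * (p - 2) < m)%coq_nat.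
Proof.
have [p N_lt p_pr] := prime_above (N + 4).
exists p; split; first by apply/leP; lia.
by move=> m [hm _]; apply/ltP; apply: h_prop_prime_gt hm => //; lia.
Qed.

End Coloring.

Open Scope R_scope.

Lemma ln_le_sub1 x : 0 < x -> ln x <= x - 1.
Proof.
intros x_pos. pose proof (exp_ineq1_le (ln x)) as bound.
rewrite exp_ln in bound by exact x_pos. lra.
Qed.

Lemma ln_ge_half x : 2 <= x -> / 2 <= ln x.
Proof.
intros x_ge2. pose proof (ln_le_sub1 (/ x)) as bound.
rewrite ln_Rinv in bound by lra.
assert (/ x <= / 2) by (apply Rinv_le_contravar; lra).
assert (0 < / x) by (apply Rinv_0_lt_compat; lra).
lra.
Qed.

Lemma pow_ratio_lt k M :
  2 <= k -> 2 * k * ln k < INR M -> k ^ 2 * (k - 1) ^ M < k ^ M.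
Proof.
intros k_ge2 M_large.
assert (ln_step : ln (k - 1) - ln k <= - / k).
{ pose proof (ln_le_sub1 ((k - 1) * / k)) as bound.
  rewrite ln_mult, ln_Rinv in bound by (try apply Rinv_0_lt_compat; lra).
  replace ((k - 1) * / k - 1) with (- / k) in bound by (field; lra).
  apply bound, Rmult_lt_0_compat; [lra | apply Rinv_0_lt_compat; lra]. }
apply ln_lt_inv; [apply Rmult_lt_0_compat | |]; try (apply pow_lt; lra).
rewrite ln_mult, !ln_pow by (try apply pow_lt; lra).
assert (M_step : INR M * (ln (k - 1) - ln k) <= INR M * - / k)
  by (apply Rmult_le_compat_l; [apply pos_INR | exact ln_step]).
assert (2 * ln k < INR M * / k).
{ apply (Rmult_lt_reg_r k); [lra |].
  replace (INR M * / k * k) with (INR M) by (field; lra). lra. }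
simpl INR. lra.
Qed.

Lemma INR_ge2 k : (2 <= k)%nat -> 2 <= INR k.
Proof. intros k_ge2. apply le_INR in k_ge2. simpl in k_ge2. lra. Qed.

Lemma pow_ratio_lt_nat k M : (2 <= k)%nat ->
  2 * INR k * ln (INR k) < INR M -> (k ^ 2 * (k - 1) ^ M < k ^ M)%nat.
Proof.
intros k_ge2 M_large. apply INR_lt.
rewrite mult_INR, !pow_INR, minus_INR by lia.
apply pow_ratio_lt; [apply INR_ge2, k_ge2 | exact M_large].
Qed.

Lemma exists_nat_between r : 0 <= r -> exists M : nat, r < INR M <= r + 1.
Proof.
intros r_nonneg. destruct (archimed r) as [up_gt up_le].
assert (up_pos : (0 <= up r)%Z) by (apply le_IZR; lra).
exists (Z.to_nat (up r)). rewrite INR_IZR_INZ, Znat.Z2Nat.id by exact up_pos. lra.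
Qed.

Lemma eventually_mul_gt1 eps :
  0 < eps -> exists N, forall n, (N <= n)%nat -> 1 < eps * INR n.
Proof.
intros eps_pos. destruct (archimed_cor1 eps eps_pos) as [N [N_inv N_pos]].
exists N. intros n N_le.
apply lt_0_INR in N_pos. apply le_INR in N_le.
apply (Rmult_lt_compat_r (INR N)) in N_inv; [| exact N_pos].
rewrite Rinv_l in N_inv by lra.
assert (eps * INR N <= eps * INR n) by (apply Rmult_le_compat_l; lra).
lra.
Qed.

Lemma h_prop_upper k : (2 <= k)%nat ->
  exists M, h_prop k M /\ INR M <= 2 * INR k * ln (INR k) + 1.
Proof.
intros k_ge2. pose proof (INR_ge2 k k_ge2) as k_real.
pose proof (ln_ge_half (INR k) k_real).
destruct (exists_nat_between (2 * INR k * ln (INR k))) as [M [M_gt M_le]]; [nra |].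
exists M. split; [| exact M_le].
apply Coloring.h_prop_of_pow_lt, pow_ratio_lt_nat; assumption.
Qed.

Lemma h_prop_exists k : exists M, h_prop k M.
Proof.
destruct k as [| [| k]].
- exists 0%nat. apply Coloring.h_prop0.
- exists 1%nat. apply Coloring.h_prop_of_pow_lt. simpl. lia.
- destruct (h_prop_upper (S (S k))) as [M [hM _]]; [lia | eauto].
Qed.

Theorem mainTheorem10 :
  (* h(k) exists for every k *)
  (forall k : nat, exists m : nat, is_h k m) /\
  (* (a) for every eps > 0, infinitely many k with h(k) > (2 - eps) k *)
  (forall eps : R, (0 < eps)%R ->
     forall N : nat, exists k : nat, (N <= k)%nat /\
       forall m : nat, is_h k m -> ((2 - eps) * INR k < INR m)%R) /\
  (* (b) for every eps > 0 there is K with h(k) < (2 + eps) k ln k for k >= K *)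
  (forall eps : R, (0 < eps)%R ->
     exists K : nat, forall k : nat, (K <= k)%nat ->
       forall m : nat, is_h k m -> (INR m < (2 + eps) * INR k * ln (INR k))%R).
Proof.
split; [| split].
- intro k. destruct (h_prop_exists k) as [M hM]. exact (Coloring.is_h_exists hM).
- intros eps eps_pos N.
  destruct (eventually_mul_gt1 (eps / 3)) as [N0 eps_large]; [lra |].
  destruct (Coloring.h_gt_infinitely_often (max N N0)) as [p [p_large p_lower]].
  exists p. split; [lia |]. intros m hm.
  assert (m_large : (2 * p <= m + 3)%nat) by (specialize (p_lower m hm); lia).
  apply le_INR in m_large. rewrite mult_INR, plus_INR in m_large. simpl in m_large.
  specialize (eps_large p ltac:(lia)). lra.
- intros eps eps_pos.
  destruct (eventually_mul_gt1 (eps / 2)) as [K eps_large]; [lra |].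
  exists (max 2 K). intros k k_large m hm.
  destruct (h_prop_upper k) as [M [hM M_le]]; [lia |].
  pose proof (Coloring.is_h_le hm hM) as m_le. apply le_INR in m_le.
  specialize (eps_large k ltac:(lia)).
  assert (k_real : 2 <= INR k) by (apply INR_ge2; lia).
  pose proof (ln_ge_half (INR k) k_real).
  nra.
Qed.
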